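(* Let $[0,1,\dots,k]$ be a hierarchical-leadership flock, and let $x_i,v_i:[0,\infty)\to\mathbb{R}^3$ ($0\le i\le k$) satisfy \[\dot x_i=v_i,\qquad \dot v_i=\sum_{j\in\mathcal{L}(i)}a_{ij}(x)(v_j-v_i),\qquad i=1,\dots,k,\] \[\dot x_0=v_0,\qquad \dot v_0=f(t),\qquad t>0,\] with $a_{ij}(x)=H/(1+|x_i-x_j|^2)^{\beta}$ for $j\in\mathcal{L}(i)$, where $H>0$ and $0<\beta<1/2$, and where the leader's free-will acceleration satisfies $|f(t)|=O((1+t)^{-\mu})$ for some exponent $\mu>k$. Then \[\max_{0\le i,j\le k}|v_i(t)-v_j(t)|=O\big((1+t)^{-(\mu-k)}\big).\]
   Context: A flock $[0,1,\dots,k]$ is under hierarchical leadership if $j\in\mathcal{L}(i)$ (agent $i$ is led by agent $j$) only if $j<i$, and every agent $i>0$ has a nonempty leader set $\mathcal{L}(i)$; agent $0$ is the overall leader with no leaders. *)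

From HB Require Import structures.
From mathcomp Require Import all_boot all_order all_algebra.
From mathcomp Require Import all_classical all_reals all_analysis.
Set Implicit Arguments. Unset Strict Implicit. Unset Printing Implicit Defensive.
Import Order.TTheory GRing.Theory Num.Theory.
Import numFieldNormedType.Exports.
Local Open Scope ring_scope.

(* Euclidean norm on R^3 (the library's norm on row vectors is the max norm). *)
Definition eucl {R : realType} (u : 'rV[R]_3) : R :=
  Num.sqrt (\sum_(c < 3) u ord0 c ^+ 2).

Definition hierarchical (k : nat) (L : 'I_k.+1 -> {set 'I_k.+1}) : Prop :=
  (forall i j : 'I_k.+1, j \in L i -> (j < i)%N) /\
  (forall i : 'I_k.+1, (0 < i)%N -> L i != finset.set0).

Definition cs_weight {R : realType} (H beta : R) (xi xj : 'rV[R]_3) : R :=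
  H / (1 + eucl (xi - xj) ^+ 2) `^ beta.

From HB Require Import structures.
From mathcomp Require Import all_boot all_order all_algebra.
From mathcomp Require Import all_classical all_reals all_analysis.
From mathcomp Require Import ring lra.
Import Order.TTheory GRing.Theory Num.Theory.
Import numFieldNormedType.Exports.
Local Open Scope classical_set_scope.
Local Open Scope ring_scope.

(* Compare each follower i with the overall leader through W = v_i - v_0.
   Along the dynamics d|W|/dt <= sum_(j in L i) a_ij (|v_j - v_0| - |W|) + |f|,
   and by induction along the hierarchy every leader j of i already satisfies
   |v_j - v_0| <= C (1 + t)^-gam.  A first barrier (first-crossing) argument
   shows that |W| stays bounded, the forcing being integrable because mu > 1.
   Then the positions of i and of one of its leaders separate at most linearly,
   so a_ij >= c (1 + t)^(-2 beta); since 2 beta < 1 this alignment eventually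
   beats the loss gam / (1 + t) of the comparison function C (1 + t)^-gam, and a
   second barrier argument gives the decay.  Any rate with gam + 1 <= mu works,
   in particular gam = mu - k as soon as k >= 1. *)

Section Dot.
Context {R : realType} {n : nat}.
Implicit Types u w : 'rV[R]_n.

Definition dot u w : R := \sum_(c < n) u ord0 c * w ord0 c.

Lemma dotC u w : dot u w = dot w u.
Proof. by apply: eq_bigr => c _; rewrite mulrC. Qed.

Lemma dotDr u w z : dot u (w + z) = dot u w + dot u z.
Proof. by rewrite /dot -big_split; apply: eq_bigr => c _; rewrite mxE mulrDr. Qed.

Lemma dotNr u w : dot u (- w) = - dot u w.
Proof. by rewrite /dot -sumrN; apply: eq_bigr => c _; rewrite mxE mulrN. Qed.

Lemma dotZr u w (a : R) : dot u (a *: w) = a * dot u w.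
Proof. by rewrite /dot mulr_sumr; apply: eq_bigr => c _; rewrite mxE mulrCA. Qed.

Lemma dot_sumr (I : finType) (P : pred I) u (F : I -> 'rV[R]_n) :
  dot u (\sum_(j | P j) F j) = \sum_(j | P j) dot u (F j).
Proof.
by rewrite /dot exchange_big; apply: eq_bigr => c _; rewrite summxE mulr_sumr.
Qed.

Lemma dot_sqr_le u w : dot u w ^+ 2 <= dot u u * dot w w.
Proof.
rewrite -(ler_pM2l (_ : 0 < 2)) // expr2 /dot !big_distrlr /= !mulrDl !mul1r.
rewrite [X in _ <= _ + X]exchange_big /= -!big_split /=.
apply: ler_sum => i _; rewrite -!big_split /=; apply: ler_sum => j _.
(* Lagrange's identity: the 2x2 minors of (u, w) have nonnegative squares. *)
have := sqr_ge0 (u ord0 i * w ord0 j - u ord0 j * w ord0 i); nra.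
Qed.

End Dot.

Section Euclidean.
Context {R : realType}.
Implicit Types u w : 'rV[R]_3.

Lemma eucl_ge0 u : 0 <= eucl u.
Proof. exact: sqrtr_ge0. Qed.

Lemma sqr_eucl u : eucl u ^+ 2 = dot u u.
Proof.
rewrite sqr_sqrtr; last by apply: sumr_ge0 => c _; rewrite sqr_ge0.
by apply: eq_bigr => c _; rewrite expr2.
Qed.

Lemma eucl0 : eucl (0 : 'rV[R]_3) = 0.
Proof. by rewrite /eucl big1 ?sqrtr0 // => c _; rewrite mxE expr0n. Qed.

Lemma euclN u : eucl (- u) = eucl u.
Proof. by rewrite /eucl; under eq_bigr do rewrite mxE sqrrN. Qed.

Lemma dot_le_eucl u w : dot u w <= eucl u * eucl w.
Proof.
have [le0|gt0] := lerP (dot u w) 0; first by rewrite (le_trans le0) ?mulr_ge0 ?eucl_ge0.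
rewrite -(ler_pXn2r (_ : 0 < 2)%N) ?nnegrE ?mulr_ge0 ?eucl_ge0 ?(ltW gt0) //.
by rewrite exprMn !sqr_eucl dot_sqr_le.
Qed.

Lemma ler_euclD u w : eucl (u + w) <= eucl u + eucl w.
Proof.
rewrite -(ler_pXn2r (_ : 0 < 2)%N) ?nnegrE ?addr_ge0 ?eucl_ge0 //.
have := dot_le_eucl u w; rewrite sqr_eucl dotDr !(dotC (u + w)) !dotDr (dotC w u).
rewrite -!sqr_eucl; nra.
Qed.

Lemma ler_euclB u w z : eucl (u - w) <= eucl (u - z) + eucl (w - z).
Proof.
have -> : u - w = (u - z) + (z - w) by rewrite addrA subrK.
by rewrite -(euclN (w - z)) opprB ler_euclD.
Qed.

End Euclidean.

Section EuclideanCalculus.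
Context {R : realType}.

Lemma continuous_eucl : continuous (@eucl R).
Proof.
move=> u; apply: continuous_comp (@sqrt_continuous R _).
rewrite -fct_sumE; apply: (big_ind (fun g : 'rV[R]_3 -> R => {for u, continuous g})).
- exact: cst_continuous.
- by move=> g h cg ch; apply: continuousD.
- move=> c _; apply: (@continuous_comp _ _ _ (fun x : 'rV[R]_3 => x ord0 c) (fun r => r ^+ 2)).
    exact: coord_continuous.
  exact: exprn_continuous.
Qed.

Lemma is_derive_coord {m n} (F : R -> 'M[R]_(m, n)) (t : R) (D : 'M[R]_(m, n)) i j :
  is_derive t 1 F D -> is_derive t 1 (fun s => F s i j) (D i j).
Proof.
case=> dF <-; have dFij := (derivable_mxP F t 1).1 dF i j.
by apply: is_derive_eq (derivableP dFij) _; rewrite (derive_mx dF) mxE.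
Qed.

Lemma is_derive_eucl (F : R -> 'rV[R]_3) (t : R) (D : 'rV[R]_3) :
  is_derive t 1 F D -> 0 < eucl (F t) ->
  is_derive t 1 (fun s => eucl (F s)) (dot (F t) D / eucl (F t)).
Proof.
move=> dF F_gt0; pose q s := \sum_(c < 3) F s ord0 c ^+ 2.
have dq : is_derive t 1 q (2 * dot (F t) D).
  rewrite /q -fct_sumE /dot mulr_sumr.
  apply: is_derive_eq; first (apply: is_derive_sum => c; rewrite -exprfctE).
    by apply: is_deriveX; apply: is_derive_coord.
  by apply: eq_bigr => c _; rewrite expr1 /= mulrA.
have q_gt0 : 0 < q t by rewrite -sqrtr_gt0.
apply: is_derive_eq (is_derive1_comp (is_derive1_sqrt q_gt0) dq) _.
by rewrite -/(eucl (F t)); field; rewrite gt_eqF.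
Qed.

End EuclideanCalculus.

Section Barrier.
Context {R : realType}.

Lemma last_nonpos (h : R -> R) (a s : R) : a <= s ->
  {within `[a, s], continuous h} -> h a <= 0 -> 0 < h s ->
  exists m, [/\ a <= m <= s, h m <= 0 & forall t, m < t <= s -> 0 < h t].
Proof.
move=> a_s ch ha hs; pose S := [set t | a <= t <= s /\ h t <= 0].
have Sa : S a by rewrite /S /= lexx a_s.
have supS : has_sup S by split; [exists a | exists s => t [/andP[]]].
have a_m : a <= sup S by exact: sup_upper_bound.
have m_s : sup S <= s by apply: ge_sup => //; [exists a | move=> t [/andP[]]].
have after_m t : sup S < t <= s -> 0 < h t.
  case/andP=> mt ts; rewrite ltNge; apply/negP => ht.
  have St : S t by split; rewrite // ts andbT (le_trans a_m) // ltW.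
  by move: mt; rewrite ltNge sup_upper_bound.
exists (sup S); split=> //; first by rewrite a_m.
rewrite leNgt; apply/negP => hm.
have /cvgr_gt /(_ _ hm) : h x @[x --> within `[a, s] (nbhs (sup S))] --> h (sup S).
  by apply/(subspace_continuousP _ _).1 => //; rewrite /= in_itv /= a_m.
rewrite near_withinE => /nbhs_ballP [e e_gt0 near_m].
have [x [/andP[ax xs] hx] mx] := sup_adherent e_gt0 supS.
have xm : x <= sup S by apply: sup_upper_bound => //; rewrite /S /= ax.
suff : 0 < h x by rewrite ltNge hx.
apply: near_m; last by rewrite /= in_itv /= ax.
by rewrite /ball /= ger0_norm ?subr_ge0 // ltrBlDr addrC -ltrBlDr.
Qed.

Lemma nonpos_barrier (h dh : R -> R) (a : R) :
  {within `[a, +oo[, continuous h} -> h a <= 0 ->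
  (forall t, a < t -> 0 < h t -> is_derive t 1 h (dh t)) ->
  (forall t, a < t -> 0 < h t -> dh t <= 0) ->
  forall t, a <= t -> h t <= 0.
Proof.
move=> ch ha dh_h dh_le0 s a_s; rewrite leNgt; apply/negP => hs.
have sub_as : `[a, s] `<=` `[a, +oo[ by move=> t /=; rewrite !in_itv /= => /andP[->].
have [m [/andP[a_m m_s] hm pos]] := @last_nonpos h a s a_s
  (continuous_subspaceW sub_as ch) ha hs.
suff : h s <= h m by rewrite leNgt (le_lt_trans hm hs).
have mt_pos t : t \in `]m, s[ -> a < t /\ 0 < h t.
  by rewrite in_itv /= => /andP[mt ts]; rewrite (le_lt_trans a_m mt) pos // mt ltW.
apply: (@ler0_derive1_le_cc _ h m s); rewrite ?in_itv /= ?lexx ?m_s //.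
- by move=> t /mt_pos[at_ ht]; have [] := dh_h t at_ ht.
- by move=> t /mt_pos[at_ ht]; have D := dh_h t at_ ht; rewrite derive1E derive_val dh_le0.
- by apply: continuous_subspaceW ch => t /=; rewrite !in_itv /= => /andP[/(le_trans a_m) ->].
Qed.

Lemma eucl_barrier (W DW : R -> 'rV[R]_3) (y dy : R -> R) (a : R) :
  {within `[a, +oo[, continuous W} ->
  (forall t, a < t -> is_derive t 1 W (DW t)) ->
  (forall t, a <= t -> is_derive t 1 y (dy t)) ->
  (forall t, a < t -> 0 <= y t) ->
  eucl (W a) <= y a ->
  (forall t, a < t -> y t < eucl (W t) -> dot (W t) (DW t) / eucl (W t) <= dy t) ->
  forall t, a <= t -> eucl (W t) <= y t.
Proof.
move=> cW dW dy_y y_ge0 Wa drift.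
suff : forall t, a <= t -> eucl (W t) - y t <= 0 by move=> le t /le; rewrite subr_le0.
apply: (nonpos_barrier (fun s => eucl (W s) - y s)
  (fun s => dot (W s) (DW s) / eucl (W s) - dy s)).
- have cy : {within `[a, +oo[, continuous y}.
    by apply: derivable_within_continuous => s; rewrite in_itv /= andbT => /dy_y[].
  have cWn : {within `[a, +oo[, continuous (fun s => eucl (W s))}.
    by move=> s; exact: continuous_comp (cW s) (continuous_eucl _).
  by move=> s; exact: cvgB (cWn s) (cy s).
- by rewrite subr_le0.
- move=> s a_s; rewrite subr_gt0 => ys; apply: is_deriveB (dy_y s (ltW a_s)).
  by apply: is_derive_eucl (dW s a_s) _; apply: le_lt_trans ys; apply: y_ge0.
- by move=> s a_s; rewrite subr_gt0 subr_le0; apply: drift.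
Qed.

End Barrier.

Section ShiftedPower.
Context {R : realType}.
Implicit Types p t : R.

Lemma is_derive_shift_powR (C p : R) {t : R} : -1 < t ->
  is_derive t 1 (fun s => C * (1 + s) `^ p) (C * (p * (1 + t) `^ (p - 1))).
Proof.
move=> t_gt; have t1_gt0 : 0 < 1 + t by lra.
have d1 : is_derive t 1 (fun s : R => 1 + s) 1.
  have := is_deriveD (is_derive_cst (1 : R) t 1) (is_derive_id t (1 : R)).
  by rewrite add0r.
have := is_derive1_comp (is_derive1_powR p t1_gt0) d1; rewrite mulr1 => dpow.
exact: (@is_deriveZ _ _ _ _ C _ _ _ dpow).
Qed.

Lemma powR_subr1 (x q : R) : 0 < x -> x `^ (q - 1) = x `^ q / x.
Proof.
move=> x_gt0; rewrite powRD; last by rewrite (gt_eqF x_gt0) implybT.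
by rewrite powR_inv1 // ltW.
Qed.

Lemma shift_powR_le1 p t : 0 <= t -> p <= 0 -> (1 + t) `^ p <= 1.
Proof.
move=> t_ge0 p_le0; rewrite -[leRHS](powRr0 (1 + t)).
by apply: ler_powR; rewrite // lerDl.
Qed.

Lemma shift_powR_unbounded p (Q : R) : 0 < p ->
  exists2 T, 0 <= T & forall t, T <= t -> Q <= (1 + t) `^ p.
Proof.
move=> p_gt0; pose M := Num.max Q 1; have M_ge0 : 0 <= M by rewrite le_max ler01 orbT.
exists (M `^ p^-1); first exact: powR_ge0.
move=> t T_t; apply: (@le_trans _ _ M); first by rewrite le_max lexx.
have T_t1 : M `^ p^-1 <= 1 + t by have := powR_ge0 M p^-1; lra.
rewrite -[leLHS](powRr1 M_ge0) -[X in M `^ X](mulVf (lt0r_neq0 p_gt0)) powRrM.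
have t1_ge0 := le_trans (powR_ge0 _ _) T_t1.
by apply: ge0_ler_powR; rewrite ?nnegrE ?powR_ge0 ?(ltW p_gt0).
Qed.

End ShiftedPower.

Lemma cs_weight_ge0 {R : realType} (H beta : R) (u w : 'rV[R]_3) :
  0 <= H -> 0 <= cs_weight H beta u w.
Proof. by move=> H_ge0; rewrite divr_ge0 ?powR_ge0. Qed.

Lemma cs_weight_ge {R : realType} (H beta D t : R) (u w : 'rV[R]_3) :
  0 < H -> 0 <= beta -> 0 <= t -> eucl (u - w) <= D * (1 + t) ->
  H / (1 + D ^+ 2) `^ beta * (1 + t) `^ (- (2 * beta)) <= cs_weight H beta u w.
Proof.
move=> H_gt0 beta_ge0 t_ge0 uw_le; have t1_ge1 : 1 <= 1 + t by lra.
have D2_ge0 := sqr_ge0 D.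
have dist_le : 1 + eucl (u - w) ^+ 2 <= (1 + D ^+ 2) * (1 + t) ^+ 2.
  have : eucl (u - w) ^+ 2 <= (D * (1 + t)) ^+ 2.
    by rewrite ler_pXn2r // ?nnegrE ?eucl_ge0 // (le_trans (eucl_ge0 _) uw_le).
  have : 1 <= (1 + t) ^+ 2 by rewrite expr2; nra.
  rewrite exprMn; nra.
rewrite /cs_weight (powRN (1 + t)) -mulrA -invfM ler_pM2l //.
rewrite lef_pV2 ?posrE ?mulr_gt0 ?powR_gt0 ?ltr_pwDl ?sqr_ge0 //.
rewrite powRrM powR_mulrn ?(le_trans ler01 t1_ge1) // -powRM ?sqr_ge0 ?addr_ge0 //.
by apply: ge0_ler_powR; rewrite // nnegrE ?mulr_ge0 ?addr_ge0 ?ler01 ?sqr_ge0.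
Qed.

Lemma eucl_le_affine {R : realType} {X DX : R -> 'rV[R]_3} {V : R} :
  {within `[0, +oo[, continuous X} ->
  (forall t : R, 0 < t -> is_derive t 1 X (DX t)) ->
  (forall t : R, 0 < t -> eucl (DX t) <= V) ->
  forall t, 0 <= t -> eucl (X t) <= eucl (X 0) + V * t.
Proof.
move=> cX dX DX_le; have V_ge0 : 0 <= V := le_trans (eucl_ge0 _) (DX_le 1 ltr01).
apply: (@eucl_barrier R X DX (fun s => eucl (X 0) + V * s) (fun=> V)) => //.
- move=> t _.
  have := is_deriveD (is_derive_cst (eucl (X 0)) t 1) (is_deriveZ V (is_derive_id t 1)).
  by rewrite add0r scaler1.
- by move=> t t_gt0; rewrite addr_ge0 ?eucl_ge0 // mulr_ge0 // ltW.
- by rewrite mulr0 addr0.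
move=> t t_gt0 lt; have X_gt0 : 0 < eucl (X t).
  by apply: le_lt_trans lt; rewrite addr_ge0 ?eucl_ge0 // mulr_ge0 // ltW.
rewrite ler_pdivrMr // mulrC (le_trans (dot_le_eucl _ _)) //.
by rewrite ler_wpM2l ?eucl_ge0 ?DX_le.
Qed.

Lemma alignment_drift_le {R : realType} {I : finType} (S : {set I}) (a : I -> R)
    (V : I -> 'rV[R]_3) (i r : I) (F : 'rV[R]_3) :
  (forall j, 0 <= a j) -> 0 < eucl (V i - V r) ->
  dot (V i - V r) (\sum_(j in S) a j *: (V j - V i) - F) / eucl (V i - V r)
  <= \sum_(j in S) a j * (eucl (V j - V r) - eucl (V i - V r)) + eucl F.
Proof.
move=> a_ge0 W_gt0; set w := V i - V r.
rewrite ler_pdivrMr // mulrDl mulr_suml dotDr dotNr dot_sumr; apply: lerD.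
  apply: ler_sum => j _; rewrite dotZr -mulrA ler_wpM2l //.
  have -> : V j - V i = (V j - V r) - w by rewrite opprB addrA subrK.
  rewrite dotDr dotNr -sqr_eucl mulrBl expr2 lerB // mulrC; exact: dot_le_eucl.
by rewrite -dotNr (le_trans (dot_le_eucl _ _)) // euclN mulrC.
Qed.

Section WeightedGaps.
Context {R : realType} {I : finType}.
Variables (S : {set I}) (a e : I -> R) (z : R).
Hypothesis a_ge0 : forall j, 0 <= a j.

Lemma sum_gap_le0 : (forall j, j \in S -> e j <= z) ->
  \sum_(j in S) a j * (e j - z) <= 0.
Proof. by move=> e_le; apply: sumr_le0 => j jS; rewrite mulr_ge0_le0 // subr_le0 e_le. Qed.

Lemma sum_gap_le (M : R) (j0 : I) : j0 \in S ->
  (forall j, j \in S -> e j <= M) -> M <= z ->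
  \sum_(j in S) a j * (e j - z) <= a j0 * (M - z).
Proof.
move=> j0S e_le Mz; rewrite (bigD1 j0) //= -[leRHS]addr0 lerD //.
  by rewrite ler_wpM2l // lerB // e_le.
apply: sumr_le0 => j /andP[jS _]; rewrite mulr_ge0_le0 // subr_le0.
exact: le_trans (e_le j jS) Mz.
Qed.

End WeightedGaps.

Section Relaxation.
Context {R : realType} {I : finType}.
Context {S : {set I}} {W DW : R -> 'rV[R]_3} {a e : R -> I -> R} {Cf mu : R}.
Hypothesis cW : {within `[0, +oo[, continuous W}.
Hypothesis dW : forall t : R, 0 < t -> is_derive t 1 W (DW t).
Hypothesis a_ge0 : forall t j, 0 <= a t j.
Hypothesis Cf_ge0 : 0 <= Cf.
Hypothesis drift_le : forall t : R, 0 < t -> 0 < eucl (W t) ->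
  dot (W t) (DW t) / eucl (W t)
  <= \sum_(j in S) a t j * (e t j - eucl (W t)) + Cf * (1 + t) `^ (- mu).

Lemma relax_bounded (B : R) : 1 < mu -> 0 <= B ->
  (forall (t : R) j, 0 < t -> j \in S -> e t j <= B) ->
  forall t : R, 0 <= t -> eucl (W t) <= B + eucl (W 0) + Cf / (mu - 1).
Proof.
move=> mu_gt1 B_ge0 e_le; set Dc := Cf / (mu - 1).
have Dc_ge0 : 0 <= Dc by rewrite divr_ge0 // subr_ge0 ltW.
have W0_ge0 := eucl_ge0 (W 0).
(* y' is the forcing bound Cf (1 + s)^-mu, and y never drops below B. *)
pose y s := B + eucl (W 0) + Dc - Dc * (1 + s) `^ (1 - mu).
have y_ge (t : R) : 0 <= t -> B + eucl (W 0) <= y t.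
  move=> t_ge0; rewrite /y -addrA lerDl subr_ge0 ler_piMr //.
  by rewrite shift_powR_le1 // subr_le0 ltW.
have y_le t : y t <= B + eucl (W 0) + Dc.
  by rewrite /y gerBl mulr_ge0 ?powR_ge0.
move=> t t_ge0; apply: le_trans (y_le t); move: t t_ge0.
apply: (@eucl_barrier R W DW y (fun s => Cf * (1 + s) `^ (- mu))).
- exact: cW.
- move=> t t_ge0; have t_gt : -1 < t by lra.
  have := is_deriveB (is_derive_cst (B + eucl (W 0) + Dc) t 1)
    (is_derive_shift_powR Dc (1 - mu) t_gt).
  move=> D; apply: is_derive_eq; rewrite (_ : 1 - mu - 1 = - mu); last by ring.
  by rewrite /Dc; field; rewrite subr_eq0 gt_eqF.
- by move=> t /ltW/y_ge; apply: le_trans; exact: addr_ge0.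
- by apply: le_trans (y_ge 0 (lexx 0)); rewrite lerDr.
move=> t t_gt0 yW; have W_gt0 : 0 < eucl (W t).
  by apply: le_lt_trans yW; apply: le_trans (y_ge _ (ltW t_gt0)); exact: addr_ge0.
apply: le_trans (drift_le t t_gt0 W_gt0) _; rewrite gerDr.
apply: sum_gap_le0 => // j jS; apply: le_trans (e_le t j t_gt0 jS) _.
by apply: ltW; apply: le_lt_trans yW; apply: le_trans (y_ge _ (ltW t_gt0)); rewrite lerDl.
Qed.

Lemma decay_drift_le (gam p c Cc C s : R) (j0 : I) :
  0 < s -> gam + 1 <= mu -> 0 < c -> 0 <= Cc -> Cc <= C -> j0 \in S ->
  (forall j, j \in S -> e s j <= Cc * (1 + s) `^ (- gam)) ->
  c * (1 + s) `^ (- p) <= a s j0 ->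
  gam * C + Cf <= c * (1 + s) `^ (1 - p) * (C - Cc) ->
  C * (1 + s) `^ (- gam) < eucl (W s) ->
  dot (W s) (DW s) / eucl (W s) <= C * (- gam * (1 + s) `^ (- gam - 1)).
Proof.
move=> s_gt0 gam_mu c_gt0 Cc_ge0 Cc_le_C j0S e_le a_ge margin yW.
have r_gt0 : 0 < 1 + s by lra.
set r := 1 + s in r_gt0 e_le a_ge margin yW *; set rho := r `^ (- gam) in e_le yW *.
have rho_ge0 : 0 <= rho := powR_ge0 _ _.
have W_gt0 : 0 < eucl (W s).
  by apply: le_lt_trans yW; rewrite mulr_ge0 // (le_trans Cc_ge0).
have gap : \sum_(j in S) a s j * (e s j - eucl (W s)) <= a s j0 * (Cc * rho - eucl (W s)).
  by apply: sum_gap_le => //; apply: ltW; apply: le_lt_trans yW; rewrite ler_wpM2r.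
have lead : a s j0 * (Cc * rho - eucl (W s)) <= c * r `^ (- p) * ((Cc - C) * rho).
  apply: le_trans (_ : a s j0 * ((Cc - C) * rho) <= _).
    by rewrite ler_wpM2l // mulrBl lerB // ltW.
  by rewrite ler_wnM2r // mulr_le0_ge0 // subr_le0.
have forcing : r `^ (- mu) <= rho / r.
  by rewrite -powR_subr1 // ler_powR // ?lerDl ?(ltW s_gt0) //; lra.
apply: le_trans (drift_le s s_gt0 W_gt0) _; rewrite -/r.
apply: le_trans (lerD (le_trans gap lead) (ler_wpM2l Cf_ge0 forcing)) _.
rewrite (_ : - p = (1 - p) - 1); last by ring.
rewrite !powR_subr1 // -/rho -subr_ge0.
(* Every term carries the factor rho / r = (1 + s)^(-gam-1); margin controls the rest. *)
set R1 := r `^ (1 - p); have -> : C * (- gam * (rho / r)) -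
    (c * (R1 / r) * ((Cc - C) * rho) + Cf * (rho / r)) =
    rho / r * (c * R1 * (C - Cc) - (gam * C + Cf)) by ring.
by rewrite mulr_ge0 ?divr_ge0 ?subr_ge0 // ltW.
Qed.

Lemma relax_decay (gam p c Cc K : R) (j0 : I) :
  0 < gam -> gam + 1 <= mu -> p < 1 -> 0 < c -> 0 <= Cc -> j0 \in S ->
  (forall (t : R) j, 0 < t -> j \in S -> e t j <= Cc * (1 + t) `^ (- gam)) ->
  (forall t : R, 0 < t -> c * (1 + t) `^ (- p) <= a t j0) ->
  (forall t : R, 0 <= t -> eucl (W t) <= K) ->
  exists C, forall t : R, 0 <= t -> eucl (W t) <= C * (1 + t) `^ (- gam).
Proof.
move=> gam_gt0 gam_mu p_lt1 c_gt0 Cc_ge0 j0S e_le a_ge W_le.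
have K_ge0 : 0 <= K := le_trans (eucl_ge0 _) (W_le 0 (lexx 0)).
(* Beyond T the weight c (1 + t)^-p dominates (gam + Cf) / (1 + t); before T the bound K
   suffices. *)
have [T T_ge0 T_large] : exists2 T, 0 <= T &
    forall t, T <= t -> 2 * (gam + Cf) / c <= (1 + t) `^ (1 - p).
  by apply: shift_powR_unbounded; rewrite subr_gt0.
pose C := Num.max (2 * Cc + 1) (K * (1 + T) `^ gam).
have C_ge : 2 * Cc + 1 <= C by rewrite le_max lexx.
have C_ge' : K * (1 + T) `^ gam <= C by rewrite le_max lexx orbT.
have early t : 0 <= t -> t <= T -> eucl (W t) <= C * (1 + t) `^ (- gam).
  move=> t_ge0 tT; apply: le_trans (W_le t t_ge0) _.
  apply: le_trans (_ : K * (1 + T) `^ gam * (1 + t) `^ (- gam) <= _); last first.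
    by rewrite ler_wpM2r ?powR_ge0.
  rewrite powRN -mulrA ler_peMr // ler_pdivlMr ?powR_gt0 ?mul1r //; last lra.
  by apply: ge0_ler_powR; rewrite ?nnegrE ?(ltW gam_gt0) //; lra.
have Cc_le_C : Cc <= C by lra.
have margin s : T <= s -> gam * C + Cf <= c * (1 + s) `^ (1 - p) * (C - Cc).
  move=> Ts; have := T_large s Ts; rewrite ler_pdivrMr // mulrC => big.
  apply: le_trans (_ : (gam + Cf) * 2 * (C - Cc) <= _).
    have : 0 <= gam * (C - 2 * Cc) + Cf * (2 * C - 2 * Cc - 1).
      by rewrite addr_ge0 // mulr_ge0 //; lra.
    lra.
  by rewrite (mulrC c) ler_wpM2r // subr_ge0.
exists C => t t_ge0; have [tT|Tt] := lerP t T; first exact: early.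
apply: (@eucl_barrier R W DW (fun s => C * (1 + s) `^ (- gam))
  (fun s => C * (- gam * (1 + s) `^ (- gam - 1))) T _ _ _ _ _ _ t (ltW Tt)).
- apply: continuous_subspaceW cW => s; rewrite /= !in_itv /= !andbT.
  exact: le_trans.
- by move=> s Ts; apply: dW; apply: le_lt_trans Ts.
- by move=> s Ts; apply: is_derive_shift_powR; lra.
- by move=> s _; rewrite mulr_ge0 ?powR_ge0 // (le_trans Cc_ge0).
- exact: early.
move=> s Ts; have s_gt0 : 0 < s := le_lt_trans T_ge0 Ts.
apply: (decay_drift_le gam p c Cc C s j0) => //; last exact/margin/ltW.
- by move=> j; apply: e_le.
- exact: a_ge.
Qed.

End Relaxation.

Section HierarchicalFlock.
Context {R : realType} {k : nat}.
Context {L : 'I_k.+1 -> {set 'I_k.+1}} {H beta mu Cf gam : R}.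
Context {x v : 'I_k.+1 -> R -> 'rV[R]_3} {f : R -> 'rV[R]_3}.
Hypothesis hL : hierarchical L.
Hypotheses (H_gt0 : 0 < H) (beta_gt0 : 0 < beta) (beta_lt : beta < 1 / 2).
Hypotheses (Cf_ge0 : 0 <= Cf) (gam_gt0 : 0 < gam) (gam_mu : gam + 1 <= mu).
Hypothesis f_le : forall t : R, 0 < t -> eucl (f t) <= Cf * (1 + t) `^ (- mu).
Hypothesis cx : forall i, {within `[0, +oo[, continuous (x i)}.
Hypothesis cv : forall i, {within `[0, +oo[, continuous (v i)}.
Hypothesis dx : forall i (t : R), 0 < t -> is_derive t 1 (x i) (v i t).
Hypothesis dv0 : forall t : R, 0 < t -> is_derive t 1 (v ord0) (f t).
Hypothesis dv : forall (i : 'I_k.+1) (t : R), (0 < i)%N -> 0 < t ->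
  is_derive t 1 (v i) (\sum_(j in L i) cs_weight H beta (x i t) (x j t) *: (v j t - v i t)).

Lemma cs_weight_decay_ge (i j : 'I_k.+1) (V : R) :
  (forall s : R, 0 < s -> eucl (v i s - v j s) <= V) ->
  exists2 c, 0 < c & forall s : R, 0 < s ->
    c * (1 + s) `^ (- (2 * beta)) <= cs_weight H beta (x i s) (x j s).
Proof.
move=> v_le; have V_ge0 : 0 <= V := le_trans (eucl_ge0 _) (v_le 1 ltr01).
have cX : {within `[0, +oo[, continuous (fun r => x i r - x j r)}.
  by move=> r; exact: cvgB (cx i r) (cx j r).
have dX (r : R) : 0 < r -> is_derive r 1 (fun r => x i r - x j r) (v i r - v j r).
  by move=> r_gt0; apply: is_deriveB; exact: dx.
set X0 := eucl (x i 0 - x j 0); have X0_ge0 : 0 <= X0 := eucl_ge0 _.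
have x_le (s : R) : 0 <= s -> eucl (x i s - x j s) <= (X0 + V) * (1 + s).
  move=> s_ge0; apply: le_trans (eucl_le_affine cX dX v_le s s_ge0) _.
  rewrite -/X0 -subr_ge0 (_ : _ - _ = V + X0 * s); last by ring.
  by rewrite addr_ge0 // mulr_ge0.
exists (H / (1 + (X0 + V) ^+ 2) `^ beta).
  by rewrite divr_gt0 // powR_gt0 // ltr_pwDl // sqr_ge0.
by move=> s /ltW s_ge0; apply: cs_weight_ge => //; [exact: ltW | exact: x_le].
Qed.

Lemma follower_decay (i : 'I_k.+1) (Cc : R) : (0 < i)%N -> 0 <= Cc ->
  (forall j : 'I_k.+1, (j < i)%N -> forall t : R, 0 <= t ->
     eucl (v j t - v ord0 t) <= Cc * (1 + t) `^ (- gam)) ->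
  exists C, forall t : R, 0 <= t -> eucl (v i t - v ord0 t) <= C * (1 + t) `^ (- gam).
Proof.
move=> i_gt0 Cc_ge0 lead_le; have [lt_L nonempty_L] := hL.
have lead_le1 j (s : R) : j \in L i -> 0 < s -> eucl (v j s - v ord0 s) <= Cc.
  move=> jL s_gt0; apply: le_trans (lead_le j (lt_L i j jL) s (ltW s_gt0)) _.
  by rewrite ler_piMr // shift_powR_le1 // ?oppr_le0 ltW.
pose W s := v i s - v ord0 s.
pose a s j := cs_weight H beta (x i s) (x j s).
pose DW s := \sum_(j in L i) a s j *: (v j s - v i s) - f s.
have a_ge0 s j : 0 <= a s j by apply: cs_weight_ge0; apply: ltW.
have cW : {within `[0, +oo[, continuous W} by move=> s; exact: cvgB (cv i s) (cv ord0 s).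
have dW (s : R) : 0 < s -> is_derive s 1 W (DW s).
  by move=> s_gt0; apply: is_deriveB; [exact: dv | exact: dv0].
have drift (s : R) : 0 < s -> 0 < eucl (W s) -> dot (W s) (DW s) / eucl (W s) <=
    \sum_(j in L i) a s j * (eucl (v j s - v ord0 s) - eucl (W s)) + Cf * (1 + s) `^ (- mu).
  move=> s_gt0 W_gt0; rewrite (le_trans (alignment_drift_le _ _ _ _ _ _ (a_ge0 s) W_gt0)) //.
  by rewrite lerD2l f_le.
set K := Cc + eucl (W 0) + Cf / (mu - 1).
have W_le : forall s : R, 0 <= s -> eucl (W s) <= K.
  apply: (relax_bounded cW dW a_ge0 Cf_ge0 drift) => // [|s j s_gt0 jL].
    by apply: lt_le_trans gam_mu; rewrite ltrDr.
  exact: lead_le1.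
case/set0Pn: (nonempty_L i i_gt0) => j0 j0L.
have [c c_gt0 a_ge] : exists2 c, 0 < c & forall s : R, 0 < s ->
    c * (1 + s) `^ (- (2 * beta)) <= a s j0.
  apply: (@cs_weight_decay_ge i j0 (K + Cc)) => s s_gt0.
  apply: le_trans (ler_euclB _ _ (v ord0 s)) _.
  by rewrite lerD ?lead_le1 ?W_le ?ltW.
apply: (relax_decay cW dW a_ge0 Cf_ge0 drift gam (2 * beta) c Cc K j0) => //.
- by move: beta_lt; lra.
- by move=> s j s_gt0 jL; apply: lead_le (lt_L i j jL) s (ltW s_gt0).
Qed.

Lemma leader_relative_decay : exists C, forall t : R, 0 <= t -> forall i,
  eucl (v i t - v ord0 t) <= C * (1 + t) `^ (- gam).
Proof.
have mono (C C' t : R) : C <= C' -> C * (1 + t) `^ (- gam) <= C' * (1 + t) `^ (- gam).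
  by move=> CC'; rewrite ler_wpM2r ?powR_ge0.
suff /(_ k.+1) [C _ decay] : forall n, exists2 C, 0 <= C & forall i : 'I_k.+1, (i < n)%N ->
    forall t : R, 0 <= t -> eucl (v i t - v ord0 t) <= C * (1 + t) `^ (- gam).
  by exists C => t t_ge0 i; exact: decay.
elim=> [|n [C C_ge0 IH]]; first by exists 0.
have [n_lt|n_ge] := ltnP n k.+1; last first.
  by exists C => // j j_lt; apply: IH; apply: leq_trans n_ge.
have [n0|n_gt0] := posnP n.
  exists C => // j; rewrite n0 ltnS leqn0 => /eqP j0 t _.
  by rewrite (_ : j = ord0) ?subrr ?eucl0 ?mulr_ge0 ?powR_ge0 //; apply/val_inj.
have [C' decay'] := follower_decay (Ordinal n_lt) C n_gt0 C_ge0 IH.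
exists (Num.max C C'); first by rewrite le_max C_ge0.
move=> j; rewrite ltnS leq_eqVlt => /orP[/eqP jn | j_lt] t t_ge0.
  rewrite (_ : j = Ordinal n_lt); last exact: val_inj.
  by apply: le_trans (decay' t t_ge0) (mono _ _ _ _); rewrite le_max lexx orbT.
by apply: le_trans (IH j j_lt t t_ge0) (mono _ _ _ _); rewrite le_max lexx.
Qed.

End HierarchicalFlock.

Theorem theorem6 (R : realType) (k : nat) (L : 'I_k.+1 -> {set 'I_k.+1})
    (H beta mu : R) (x v : 'I_k.+1 -> R -> 'rV[R]_3) (f : R -> 'rV[R]_3) :
  hierarchical L ->
  0 < H -> 0 < beta -> beta < 1 / 2 ->
  (k%:R < mu) ->
  (exists Cf : R, forall t : R, 0 < t -> eucl (f t) <= Cf * (1 + t) `^ (- mu)) ->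
  (forall i : 'I_k.+1, {within `[0, +oo[, continuous (x i)}) ->
  (forall i : 'I_k.+1, {within `[0, +oo[, continuous (v i)}) ->
  (forall (i : 'I_k.+1) (t : R), 0 < t -> is_derive t 1 (x i) (v i t)) ->
  (forall t : R, 0 < t -> is_derive t 1 (v ord0) (f t)) ->
  (forall (i : 'I_k.+1) (t : R), (0 < i)%N -> 0 < t ->
     is_derive t 1 (v i)
       (\sum_(j in L i) cs_weight H beta (x i t) (x j t) *: (v j t - v i t))) ->
  exists C : R, forall t : R, 0 <= t -> forall i j : 'I_k.+1,
    eucl (v i t - v j t) <= C * (1 + t) `^ (- (mu - k%:R)).
Proof.
move=> hL H_gt0 beta_gt0 beta_lt k_mu [Cf f_le] cx cv dx dv0 dv.
have [k0|k_gt0] := posnP k.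
  by subst k; exists 0 => t _ i j; rewrite (ord1 i) (ord1 j) subrr eucl0 mul0r.
have Cf_ge0 : 0 <= Num.max Cf 0 by rewrite le_max lexx orbT.
have f_le' (t : R) : 0 < t -> eucl (f t) <= Num.max Cf 0 * (1 + t) `^ (- mu).
  by move=> t_gt0; apply: le_trans (f_le t t_gt0) _; rewrite ler_wpM2r ?powR_ge0 ?le_max ?lexx.
have gam_gt0 : 0 < mu - k%:R by rewrite subr_gt0.
have gam_mu : mu - k%:R + 1 <= mu by rewrite -lerBrDr lerD2l lerN2 ler1n.
have [C decay] := leader_relative_decay hL H_gt0 beta_gt0 beta_lt Cf_ge0 gam_gt0 gam_mu
  f_le' cx cv dx dv0 dv.
exists (C + C) => t t_ge0 i j; rewrite mulrDl.
by apply: le_trans (ler_euclB _ _ (v ord0 t)) _; apply: lerD; apply: decay.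
Qed.
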